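(* Let $G$ be a finite graph with no isolated vertices. If $G$ has $2N+1$ vertices and is almost Hamiltonian, then there is no nontrivial circuit injection $f:G_M\rightarrow B$ with $B$ a binary matroid. If $G$ has $2N$ vertices and is Hamiltonian, then there is no nontrivial circuit injection $f:G_M\rightarrow B$ with $B$ a binary matroid.
   Context: Graphs are undirected without loops or multiple edges. $G_M$ is the cycle matroid of $G$ (cells: edges; circuits: edge sets of cycles of $G$). A matroid is a pair $(S,\mathscr{C})$, $S\neq\emptyset$, $\mathscr{C}\subseteq 2^S$, satisfying: (I) $A,B\in\mathscr{C}$, $A\subseteq B$ implies $A=B$; (II) $A,B\in\mathscr{C}$, $a\in A\cap B$, $b\in (A\cup B)\setminus(A\cap B)$ implies there exists $D\in\mathscr{C}$ with $D\subseteq A\cup B$, $a\notin D$, $b\in D$. A matroid is binary if the symmetric difference of any two circuits is a union of pairwise disjoint circuits. A circuit injection $f:G_M\rightarrow B$ is a bijection from $E(G)$ onto the cells of $B$ sending each circuit of $G$ to a circuit of $B$; it is nontrivial if $B$ has a circuit not equal to the image of any circuit of $G$. $G$ is Hamiltonian if some circuit contains all its vertices. A graph with $n$ vertices is almost Hamiltonian if every set of $n-1$ of its vertices is contained in the vertex set of some circuit. *)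

From mathcomp Require Import all_boot.
Set Implicit Arguments. Unset Strict Implicit. Unset Printing Implicit Defensive.

(* A finite simple graph: vertex set V (finType), adjacency e : rel V,
   assumed symmetric and irreflexive in the theorem. *)
Section Graph.
Variables (V : finType) (e : rel V).

Definition edges : {set {set V}} :=
  [set A : {set V} | [exists x, exists y, (e x y) && (A == [set x; y])]].

Definition is_cycle (s : seq V) : bool := ucycleb e s && (2 < size s).

Definition cycle_vertices (s : seq V) : {set V} := [set x in s].
Definition cycle_edges (s : seq V) : {set {set V}} :=
  [set [set x; next s x] | x in s].

Definition hamiltonian : Prop :=
  exists s, is_cycle s /\ cycle_vertices s = [set: V].

Definition almost_hamiltonian : Prop :=
  forall A : {set V}, #|A| = #|V| - 1 ->
    exists s, is_cycle s /\ A \subset cycle_vertices s.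

Definition no_isolated_vertices : Prop := forall v, exists w, e v w.
End Graph.

Section Matroid.
Variables (S : finType) (C : {set {set S}}).

Definition symdiff (A B : {set S}) : {set S} := (A :\: B) :|: (B :\: A).

Definition is_matroid : Prop :=
  0 < #|S| /\
  (forall A B, A \in C -> B \in C -> A \subset B -> A = B) /\
  (forall A B a b, A \in C -> B \in C -> a \in A :&: B ->
      b \in symdiff A B ->
      exists2 D, D \in C & [/\ D \subset A :|: B, a \notin D & b \in D]).

Definition is_binary : Prop :=
  forall A B, A \in C -> B \in C ->
    exists P : {set {set S}}, [/\ P \subset C, trivIset P & cover P = symdiff A B].
End Matroid.

(* circuit injection f : G_M -> B, f given on {set V} but only its
   restriction to E(G) matters *)
Definition circuit_injection (V : finType) (e : rel V) (S : finType)
    (C : {set {set S}}) (f : {set V} -> S) : Prop :=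
  {in edges e &, injective f} /\ f @: edges e = [set: S] /\
  (forall s, is_cycle e s -> f @: cycle_edges s \in C).

Definition nontrivial_ci (V : finType) (e : rel V) (S : finType)
    (C : {set {set S}}) (f : {set V} -> S) : Prop :=
  exists2 D, D \in C & forall s, is_cycle e s -> D <> f @: cycle_edges s.

From HB Require Import structures.
From mathcomp Require Import all_boot zify.
Set Implicit Arguments. Unset Strict Implicit. Unset Printing Implicit Defensive.

(* Let D be a circuit of B and X the set of edges that f maps into D. The set T
   of odd-degree vertices of X has even size; when |V| is odd it misses a vertex,
   so in both cases T lies on one cycle s of G, and some set J of edges of s has
   exactly T as its odd-degree vertices. Then X + J has only even degrees, so it
   is a sum of cycles and f(J) is a sum of circuits of B. Since B is binary, a
   nonempty f(J) contains a circuit; that circuit lies in the circuit f(E(s)),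
   hence equals it, so J = E(s) and T is empty after all. Then X, being even and
   nonempty, contains a cycle s', and f(E(s')) is a circuit inside D, so it is D:
   every circuit of B is the image of a cycle. *)

Section SymmetricDifference.
Variable S : finType.
Implicit Types A B : {set S}.

Lemma in_symdiff A B x : (x \in symdiff A B) = (x \in A) (+) (x \in B).
Proof. by rewrite !inE; case: (x \in A); case: (x \in B). Qed.

Lemma symdiffA : associative (@symdiff S).
Proof. by move=> A B D; apply/setP=> x; rewrite !in_symdiff addbA. Qed.

Lemma symdiffC : commutative (@symdiff S).
Proof. by move=> A B; apply/setP=> x; rewrite !in_symdiff addbC. Qed.

Lemma set0_symdiff : left_id set0 (@symdiff S).
Proof. by move=> A; apply/setP=> x; rewrite in_symdiff inE. Qed.

Lemma symdiffv A : symdiff A A = set0.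
Proof. by apply/setP=> x; rewrite in_symdiff inE addbb. Qed.

Lemma symdiffK A B : symdiff A (symdiff A B) = B.
Proof. by rewrite symdiffA symdiffv set0_symdiff. Qed.

Lemma symdiff_subU A B : symdiff A B \subset A :|: B.
Proof. by apply/subsetP=> x; rewrite in_symdiff !inE; case: (x \in A). Qed.

Lemma odd_card_symdiff A B : odd #|symdiff A B| = odd #|A| (+) odd #|B|.
Proof.
rewrite /symdiff cardsU -(cardsID B A) -(cardsID A B) [B :&: A]setIC.
have -> : (A :\: B) :&: (B :\: A) = set0.
  by apply/setP=> x; rewrite !inE; case: (x \in A); case: (x \in B).
rewrite cards0 subn0 !oddD.
by case: (odd #|A :\: B|); case: (odd #|B :\: A|); case: (odd #|A :&: B|).
Qed.

Lemma card_symdiff_lt A B : A :&: B != set0 -> #|symdiff A B| < #|A| + #|B|.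
Proof.
rewrite -card_gt0 => AB_gt0.
rewrite /symdiff cardsU -(cardsID B A) -(cardsID A B) [B :&: A]setIC.
have := leq_subr #|(A :\: B) :&: (B :\: A)| (#|A :\: B| + #|B :\: A|); lia.
Qed.

HB.instance Definition _ :=
  Monoid.isComLaw.Build {set S} set0 (@symdiff S) symdiffA symdiffC set0_symdiff.

Lemma in_big_symdiff (I : Type) (r : seq I) (P : pred I) (F : I -> {set S}) x :
  (x \in \big[@symdiff S/set0]_(i <- r | P i) F i) =
  \big[addb/false]_(i <- r | P i) (x \in F i).
Proof. exact: (big_morph (fun A => x \in A) (fun A B => in_symdiff A B x) (in_set0 x)). Qed.

Lemma big_symdiff_subU (I : Type) (r : seq I) (P : pred I) (F : I -> {set S}) :
  \big[@symdiff S/set0]_(i <- r | P i) F i \subset \bigcup_(i <- r | P i) F i.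
Proof.
elim/big_ind2: _ => [|A1 B1 A2 B2 sub1 sub2|i _]; [exact: sub0set | | exact: subxx].
exact: subset_trans (symdiff_subU _ _) (setUSS sub1 sub2).
Qed.

Lemma big_symdiff_trivIset (P : {set {set S}}) :
  trivIset P -> \big[@symdiff S/set0]_(A in P) A = cover P.
Proof.
move=> /trivIsetP tiP; apply/setP=> x; rewrite in_big_symdiff.
case: (boolP (x \in cover P)) => [/bigcupP [A PA xA] | xnP].
  rewrite (bigD1 A) //= xA big1 // => B /andP [PB BA].
  by apply: (disjointFr (tiP _ _ PA PB _) xA); rewrite eq_sym.
rewrite big1 // => A PA; apply: contraNF xnP => xA.
by apply/bigcupP; exists A.
Qed.

Lemma circuit_sub_big_symdiff (C : {set {set S}}) (l : seq {set S}) :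
  is_binary C -> set0 \notin C -> {subset l <= C} ->
  \big[@symdiff S/set0]_(A <- l) A != set0 ->
  exists2 D, D \in C & D \subset \big[@symdiff S/set0]_(A <- l) A.
Proof.
move=> binC C0; have [n] := ubnP (\sum_(A <- l) #|A|).
elim: n l => // n IH [|A l]; first by move=> _ _; rewrite big_nil eqxx.
rewrite !big_cons ltnS => size_l Cl nz.
have CA : A \in C by apply: Cl; rewrite mem_head.
(* Replacing A and a circuit B meeting it by a partition of A + B into circuits
   keeps the sum and shrinks the total size; if A meets no other member, A lies
   in the sum. *)
have [/hasP [B lB AB] | /hasPn disjA] := boolP (has (fun B => A :&: B != set0) l).
  have CB : B \in C by apply: Cl; rewrite inE lB orbT.
  have [P [PC tiP coverP]] := binC A B CA CB.
  have eq_l : symdiff A (\big[@symdiff S/set0]_(X <- l) X) =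
              \big[@symdiff S/set0]_(X <- enum P ++ rem B l) X.
    by rewrite big_cat big_enum big_symdiff_trivIset // coverP
               (perm_big _ (perm_to_rem lB)) big_cons symdiffA.
  rewrite eq_l; apply: IH; rewrite -?eq_l //.
  - rewrite big_cat big_enum (eqP tiP) coverP.
    move: size_l; rewrite (perm_big _ (perm_to_rem lB)) big_cons.
    by have := card_symdiff_lt AB; rewrite /=; lia.
  - move=> X; rewrite mem_cat mem_enum => /orP [/(subsetP PC) //|/mem_rem lX].
    by apply: Cl; rewrite inE lX orbT.
exists A => //; apply/subsetP=> x xA; rewrite in_symdiff xA /=.
apply/negP=> /(subsetP (big_symdiff_subU _ _ _)); rewrite bigcup_seq.
case/bigcupP=> B lB xB; have := disjA B lB; rewrite negbK => /eqP AB0.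
by have := in_set0 x; rewrite -AB0 inE xA xB.
Qed.

End SymmetricDifference.

Lemma uniq_path_maximal (T : finType) (r : rel T) x p :
  uniq (x :: p) -> path r x p ->
  exists x' p', [/\ uniq (x' :: p'), path r x' p', size p <= size p' &
                    forall y, r y x' -> y \in x' :: p'].
Proof.
have [n] := ubnP (#|T| - size p); elim: n x p => // n IH x p.
rewrite ltnS => size_p ux px.
have [y /andP [yx yNp] | maximal] := pickP [pred y | r y x && (y \notin x :: p)].
  have uy : uniq (y :: x :: p) by rewrite /= yNp.
  have size_xp : (size p).+2 <= #|T|.
    by have := max_card (mem (y :: x :: p)); rewrite (card_uniqP uy).
  have size_yxp : #|T| - (size p).+1 < n by lia.
  have pyx : path r y (x :: p) by rewrite /= yx.
  have [x' [p' [ux' px' size_p' maximal]]] := IH y (x :: p) size_yxp uy pyx.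
  by exists x', p'; split=> //; apply: leq_trans size_p'.
exists x, p; split=> // y yx; apply: contraT => yNp.
by have := maximal y; rewrite /= yx yNp.
Qed.

Section EdgeSets.
Variable V : finType.
Implicit Types (Y Z : {set {set V}}) (s : seq V) (a b t u v w x : V).

Definition adj Y : rel V := fun x y => [set x; y] \in Y.
Definition nbhd Y v : {set V} := [set w | adj Y v w].
Definition odd_vertices Y : {set V} := [set v | odd #|nbhd Y v|].

Lemma eq_set2l a b w : ([set a; w] == [set a; b]) = (w == b).
Proof.
apply/eqP/eqP=> [eq_ab|-> //].
have /set2P [ba|//] : b \in [set a; w] by rewrite eq_ab set22.
by have /set2P [wa|//] : w \in [set a; b]; rewrite -?eq_ab ?set22 // wa ba.
Qed.

Lemma odd_vertices_symdiff Y Z :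
  odd_vertices (symdiff Y Z) = symdiff (odd_vertices Y) (odd_vertices Z).
Proof.
apply/setP=> v; rewrite in_symdiff !inE -odd_card_symdiff.
by congr (odd _); apply: eq_card => w; rewrite in_symdiff !inE /adj in_symdiff.
Qed.

Lemma odd_vertices0 : odd_vertices set0 = set0.
Proof.
apply/setP=> v; rewrite !inE (_ : nbhd _ v = set0) ?cards0 //.
by apply/setP=> w; rewrite !inE /adj inE.
Qed.

Lemma odd_vertices_edge a b :
  a != b -> odd_vertices [set [set a; b]] = symdiff [set a] [set b].
Proof.
move=> ab; apply/setP=> v; rewrite in_symdiff !inE.
have [->|va] := eqVneq v a; rewrite ?(negPf ab).
  rewrite (_ : nbhd _ a = [set b]) ?cards1 //; apply/setP=> w.
  by rewrite !inE /adj inE eq_set2l.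
have [->|vb] := eqVneq v b.
  rewrite /= (_ : nbhd _ b = [set a]) ?cards1 //; apply/setP=> w.
  by rewrite !inE /adj inE [[set a; b]]setUC eq_set2l.
rewrite (_ : nbhd _ v = set0) ?cards0 //; apply/setP=> w; rewrite !inE /adj inE.
apply: contraTF (set21 v w) => /eqP ->; rewrite !inE.
by rewrite (negPf va) (negPf vb).
Qed.

Lemma odd_card_odd_vertices Y :
  {in Y, forall E : {set V}, #|E| = 2} -> ~~ odd #|odd_vertices Y|.
Proof.
have [n] := ubnP #|Y|; elim: n Y => // n IH Y.
have [-> _ _|/set0Pn [E YE]] := eqVneq Y set0; first by rewrite odd_vertices0 cards0.
move=> card_Y card2; have /cards2P [a [b [ab defE]]] : #|E| == 2 by rewrite card2.
have -> : Y = symdiff [set E] (Y :\ E).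
  by apply/setP=> F; rewrite in_symdiff !inE; case: eqP => // ->.
rewrite odd_vertices_symdiff odd_card_symdiff defE odd_vertices_edge //.
rewrite odd_card_symdiff !cards1 /=.
apply: IH => [|F /setD1P [_ /card2] //].
by move: card_Y; rewrite -defE (cardsD1 E) YE.
Qed.

Lemma adjC Y : symmetric (adj Y).
Proof. by move=> x y; rewrite /adj setUC. Qed.

Lemma adj_irr Y : {in Y, forall E : {set V}, #|E| = 2} -> irreflexive (adj Y).
Proof. by move=> card2 x; apply: contraTF isT => /card2; rewrite setUid cards1. Qed.

Lemma is_cycle_adjS Y Z s : Y \subset Z -> is_cycle (adj Y) s -> is_cycle (adj Z) s.
Proof.
move=> /subsetP YZ /andP [/andP [cs us] s_gt2]; rewrite /is_cycle /ucycleb us s_gt2 !andbT.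
by apply: sub_cycle cs => x y /YZ.
Qed.

Lemma cycle_edges_adj_sub Y s : cycle (adj Y) s -> cycle_edges s \subset Y.
Proof. by move=> cs; apply/subsetP=> _ /imsetP [x xs ->]; apply: next_cycle cs xs. Qed.

Lemma cycle_edges_eq0 s : (cycle_edges s == set0) = (s == [::]).
Proof.
case: s => [|x s]; first by apply/eqP/setP=> E; rewrite inE; apply/imsetP=> [[y]].
by apply/negbTE/set0Pn; exists [set x; next (x :: s) x]; apply: imset_f; apply: mem_head.
Qed.

Lemma next2_neq s x : uniq s -> 2 < size s -> x \in s ->
  next s x != x /\ next s (next s x) != x.
Proof.
move=> us s_gt2 /rot_to [i s' def_s]; rewrite -!(next_rot i us) def_s.
have : uniq (x :: s') by rewrite -def_s rot_uniq.
have : 2 < size (x :: s') by rewrite -def_s size_rot.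
case: s' {def_s} => [|y [|z s']] //= _.
rewrite !inE => /andP [/norP [xy /norP [xz _]] /andP [/norP [yz _] _]].
by rewrite eqxx [y == x]eq_sym (negPf xy) eqxx eq_sym.
Qed.

Lemma nbhd_cycle_edges s v : uniq s -> 2 < size s -> v \in s ->
  nbhd (cycle_edges s) v = [set next s v; prev s v].
Proof.
move=> us s_gt2 vs; apply/setP=> w; rewrite !inE /adj.
apply/imsetP/orP=> [[x xs eq_vw] | [/eqP -> | /eqP ->]].
- have [nx_x _] := next2_neq us s_gt2 xs.
  have /set2P [vx | v_nx] : v \in [set x; next s x] by rewrite -eq_vw set21.
    by left; rewrite -(eq_set2l v) eq_vw vx eqxx.
  right; have /set2P [xv | <-] : x \in [set v; w] by rewrite eq_vw set21.
    by move: nx_x; rewrite -v_nx xv eqxx.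
  by rewrite v_nx prev_next.
- by exists v.
- by exists (prev s v); rewrite ?mem_prev // next_prev // setUC.
Qed.

Lemma odd_vertices_cycle_edges s :
  uniq s -> 2 < size s -> odd_vertices (cycle_edges s) = set0.
Proof.
move=> us s_gt2; apply/setP=> v; rewrite !inE.
have [vs | vNs] := boolP (v \in s).
  rewrite nbhd_cycle_edges // cards2; have [_ nnv] := next2_neq us s_gt2 vs.
  suff -> : next s v != prev s v by [].
  by apply: contraNneq nnv => ->; rewrite next_prev.
rewrite (_ : nbhd _ v = set0) ?cards0 //; apply/setP=> w; rewrite !inE /adj.
apply/imsetP=> [[x xs eq_vw]]; move: vNs.
have /set2P [-> | ->] : v \in [set x; next s x] by rewrite -eq_vw set21.
  by rewrite xs.
by rewrite mem_next xs.
Qed.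

Lemma even_nbhd_other Y a b :
  a \notin odd_vertices Y -> adj Y a b -> exists2 c, adj Y a c & c != b.
Proof.
move=> even_a ab; have /subsetPn [c ac cb] : ~~ (nbhd Y a \subset [set b]).
  apply: contra even_a => sub_b; rewrite inE (_ : nbhd Y a = [set b]) ?cards1 //.
  by apply/eqP; rewrite eqEsubset sub_b sub1set inE.
by exists c; move: ac cb; rewrite !inE.
Qed.

Lemma maximal_path_cycle Y x p : {in Y, forall E : {set V}, #|E| = 2} ->
  x \notin odd_vertices Y -> uniq (x :: p) -> path (adj Y) x p -> p != [::] ->
  (forall y, adj Y x y -> y \in x :: p) -> exists s, is_cycle (adj Y) s.
Proof.
case: p => [|h p] card2 even_x ux px; first by rewrite eqxx.
move=> _ maximal.
have xh : adj Y x h by case/andP: px.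
have [y xy yh] := even_nbhd_other even_x xh.
have yx : y != x by apply: contraTneq xy => ->; rewrite adj_irr.
have y_p : y \in p by have := maximal y xy; rewrite !inE (negPf yx) (negPf yh).
case/splitPr: y_p ux px => p1 p2 ux px.
exists (x :: h :: rcons p1 y).
have {}ux : uniq (x :: h :: rcons p1 y).
  by move: ux; rewrite -cat_rcons -2!cat_cons cat_uniq => /andP [].
have {}px : path (adj Y) x (h :: rcons p1 y).
  by move: px; rewrite -cat_rcons -cat_cons cat_path => /andP [].
rewrite /is_cycle /ucycleb ux /= size_rcons !ltnS andbT.
by move: px => /= /andP [-> ph]; rewrite rcons_path ph last_rcons adjC xy.
Qed.

Lemma even_edges_cycle Y : {in Y, forall E : {set V}, #|E| = 2} -> Y != set0 ->
  odd_vertices Y = set0 -> exists s, is_cycle (adj Y) s.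
Proof.
move=> card2 /set0Pn [E YE] even_Y.
have /cards2P [a [b [ab defE]]] : #|E| == 2 by rewrite card2.
have uab : uniq [:: a; b] by rewrite /= inE ab.
have pab : path (adj Y) a [:: b] by rewrite /= andbT /adj -defE.
have [x [p [ux px size_p maximal]]] := uniq_path_maximal uab pab.
apply: (maximal_path_cycle card2 _ ux px) => [||y xy].
- by rewrite even_Y inE.
- by case: p size_p {ux px maximal}.
- by apply: maximal; rewrite adjC.
Qed.

Lemma even_edges_big_symdiff_cycles Y : {in Y, forall E : {set V}, #|E| = 2} ->
  odd_vertices Y = set0 ->
  exists2 ss : seq (seq V), {in ss, forall s, is_cycle (adj Y) s} &
    Y = \big[@symdiff _/set0]_(s <- ss) cycle_edges s.
Proof.
have [n] := ubnP #|Y|; elim: n Y => // n IH Y card_Y card2 even_Y.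
have [-> | Y_neq0] := eqVneq Y set0; first by exists [::]; rewrite ?big_nil.
have [s cycle_s] := even_edges_cycle card2 Y_neq0 even_Y.
have /andP [/andP [cs us] s_gt2] := cycle_s.
set Y' := symdiff Y (cycle_edges s).
have Y'_sub : Y' \subset Y.
  apply/subsetP=> E; rewrite in_symdiff.
  by case: (boolP (E \in Y)) => //= /negPf <-; apply: (subsetP (cycle_edges_adj_sub cs)).
have card_Y' : #|Y'| < n.
  rewrite -ltnS; apply: leq_trans card_Y; rewrite ltnS; apply: proper_card.
  rewrite properEneq Y'_sub andbT.
  apply/eqP=> eqY'; move: s_gt2.
  have /eqP : cycle_edges s = set0.
    by rewrite -(symdiffK Y (cycle_edges s)) -/Y' eqY' symdiffv.
  by rewrite cycle_edges_eq0 => /eqP ->.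
have even_Y' : odd_vertices Y' = set0.
  by rewrite odd_vertices_symdiff even_Y odd_vertices_cycle_edges // symdiffv.
have [ss cycle_ss defY'] := IH Y' card_Y' (sub_in1 (subsetP Y'_sub) card2) even_Y'.
exists (s :: ss) => [t|]; last by rewrite big_cons -defY' /Y' (symdiffC Y) symdiffK.
by rewrite inE => /predU1P [-> // | /cycle_ss]; apply: is_cycle_adjS.
Qed.

Lemma cycle_edges_arc a s t : uniq (a :: s) -> t \in a :: s ->
  exists2 P : {set {set V}},
    P \subset cycle_edges (a :: s) & odd_vertices P = symdiff [set a] [set t].
Proof.
move=> us ts; rewrite -(nth_index a ts).
have : index t (a :: s) < size (a :: s) by rewrite index_mem.
elim: (index t (a :: s)) => [|k IH] k_lt.
  by exists set0; rewrite ?sub0set // odd_vertices0 symdiffv.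
have [P sub_P defP] := IH (ltnW k_lt).
set x := nth a (a :: s) k; set y := nth a (a :: s) k.+1.
have xs : x \in a :: s by apply/mem_nth/ltnW.
have next_x : next (a :: s) x = y by rewrite next_nth xs index_uniq // ltnW.
have xy : x != y by rewrite nth_uniq // ?(ltnW k_lt) // ltn_eqF.
exists (symdiff P [set [set x; y]]).
  apply: subset_trans (symdiff_subU _ _) _; rewrite subUset sub_P sub1set -next_x.
  exact: imset_f.
by rewrite odd_vertices_symdiff defP odd_vertices_edge // -symdiffA symdiffK.
Qed.

Lemma cycle_edges_join s t u : uniq s -> t \in s -> u \in s ->
  exists2 P : {set {set V}},
    P \subset cycle_edges s & odd_vertices P = symdiff [set t] [set u].
Proof.
case: s => [|a s] // us ts us'.
have [Pt sub_t def_t] := cycle_edges_arc us ts.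
have [Pu sub_u def_u] := cycle_edges_arc us us'.
exists (symdiff Pt Pu).
  by apply: subset_trans (symdiff_subU _ _) _; rewrite subUset sub_t sub_u.
by rewrite odd_vertices_symdiff def_t def_u (symdiffC [set a]) -symdiffA symdiffK.
Qed.

Lemma cycle_edges_T_join s (T : {set V}) : uniq s -> T \subset cycle_vertices s ->
  ~~ odd #|T| -> exists2 J : {set {set V}}, J \subset cycle_edges s & odd_vertices J = T.
Proof.
move=> us; have [n] := ubnP #|T|; elim: n T => // n IH T.
have [-> _ _ _ | /set0Pn [t tT]] := eqVneq T set0.
  by exists set0; rewrite ?sub0set ?odd_vertices0.
move=> card_T /subsetP sub_T even_T.
have /set0Pn [u uT'] : T :\ t != set0.
  by apply: contraNneq even_T => T1; rewrite (cardsD1 t) tT T1 cards0.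
have /setD1P [ut uT] := uT'.
set T' := T :\ t :\ u.
have card_T' : #|T| = #|T'|.+2 by rewrite (cardsD1 t T) tT (cardsD1 u (T :\ t)) uT'.
have lt_T'n : #|T'| < n by move: card_T; rewrite card_T'; lia.
have sub_T' : T' \subset cycle_vertices s.
  by apply/subsetP=> v /setD1P [_ /setD1P [_ /sub_T]].
have even_T' : ~~ odd #|T'| by move: even_T; rewrite card_T' /= negbK.
have [J' sub_J' def_J'] := IH T' lt_T'n sub_T' even_T'.
have [P sub_P def_P] : exists2 P : {set {set V}}, P \subset cycle_edges s &
    odd_vertices P = symdiff [set t] [set u].
  by apply: (cycle_edges_join us); [move: (sub_T t tT) | move: (sub_T u uT)]; rewrite inE.
exists (symdiff J' P).
  by apply: subset_trans (symdiff_subU _ _) _; rewrite subUset sub_J' sub_P.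
rewrite odd_vertices_symdiff def_J' def_P; apply/setP=> v; rewrite !in_symdiff !inE.
have [->|_] := eqVneq v t; first by rewrite eq_sym (negPf ut) tT.
have [->|_] := eqVneq v u; first by rewrite uT.
by rewrite /= addbF.
Qed.

End EdgeSets.

Section Graph.
Variables (V : finType) (e : rel V).

Lemma adj_edges : symmetric e -> adj (edges e) =2 e.
Proof.
move=> e_sym x y; rewrite /adj inE.
apply/existsP/idP=> [[a /existsP [b /andP [ab eq_xy]]] | xy].
  have [xa | xNa] := eqVneq x a; first by move: eq_xy; rewrite xa eq_set2l => /eqP ->.
  have /set2P [/eqP xa | xb] : x \in [set a; b] by rewrite -(eqP eq_xy) set21.
    by rewrite xa in xNa.
  by move: eq_xy; rewrite xb [[set a; b]]setUC eq_set2l => /eqP ->; rewrite e_sym.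
by exists x; apply/existsP; exists y; rewrite xy /=.
Qed.

Lemma is_cycle_edges : symmetric e -> is_cycle (adj (edges e)) =1 is_cycle e.
Proof. by move=> e_sym s; rewrite /is_cycle /ucycleb (eq_cycle (adj_edges e_sym)). Qed.

Lemma cycle_edges_sub_edges s :
  symmetric e -> is_cycle e s -> cycle_edges s \subset edges e.
Proof.
move=> e_sym; rewrite -is_cycle_edges // => /andP [/andP [cs _] _].
exact: cycle_edges_adj_sub.
Qed.

Lemma card_edges : irreflexive e -> {in edges e, forall E : {set V}, #|E| = 2}.
Proof.
move=> e_irr E; rewrite inE => /existsP [a /existsP [b /andP [ab /eqP ->]]].
by rewrite cards2; case: eqVneq ab => [->|]; rewrite ?e_irr.
Qed.

Definition even_sets_on_cycles : Prop :=
  forall T : {set V}, ~~ odd #|T| -> exists s, is_cycle e s /\ T \subset cycle_vertices s.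

Lemma almost_hamiltonian_even_sets :
  odd #|V| -> almost_hamiltonian e -> even_sets_on_cycles.
Proof.
move=> odd_V ham T even_T; have /subsetPn [z _ zNT] : ~~ ([set: V] \subset T).
  apply: contra even_T => VT; suff -> : T = [set: V] by rewrite cardsT.
  by apply/eqP; rewrite eqEsubset subsetT VT.
have card_Nz : #|[set~ z]| = #|V| - 1 by rewrite cardsC1 subn1.
have [s [cs sub_s]] := ham _ card_Nz.
exists s; split=> //; apply: subset_trans sub_s.
by apply/subsetP=> x xT; rewrite in_setC1; apply: contraNneq zNT => <-.
Qed.

Lemma hamiltonian_even_sets : hamiltonian e -> even_sets_on_cycles.
Proof. by move=> [s [cs Vs]] T _; exists s; rewrite Vs subsetT. Qed.

End Graph.

Section CircuitInjection.
Variables (V : finType) (e : rel V) (S : finType) (C : {set {set S}}) (f : {set V} -> S).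
Hypotheses (e_sym : symmetric e) (e_irr : irreflexive e).
Hypotheses (f_inj : {in edges e &, injective f}) (f_onto : f @: edges e = [set: S]).
Hypothesis f_cycle : forall s, is_cycle e s -> f @: cycle_edges s \in C.
Hypothesis C_clutter : forall A B, A \in C -> B \in C -> A \subset B -> A = B.
Hypothesis C_binary : is_binary C.
Implicit Types (A B D : {set S}) (Y J : {set {set V}}).

Definition edge_preim (D : {set S}) : {set {set V}} := [set E in edges e | f E \in D].

Lemma in_edge_preim D E : (E \in edge_preim D) = (E \in edges e) && (f E \in D).
Proof. by rewrite /edge_preim in_set. Qed.

Lemma edge_preim_sub D : edge_preim D \subset edges e.
Proof. by apply/subsetP=> E; rewrite in_edge_preim => /andP []. Qed.

Lemma edge_preimS A B : A \subset B -> edge_preim A \subset edge_preim B.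
Proof.
by move=> /subsetP AB; apply/subsetP=> E; rewrite !in_edge_preim => /andP [-> /AB].
Qed.

Lemma edge_preim_big_symdiff (l : seq {set S}) :
  edge_preim (\big[@symdiff S/set0]_(A <- l) A) =
  \big[@symdiff _/set0]_(A <- l) edge_preim A.
Proof.
apply: (big_morph edge_preim) => [A B|]; apply/setP=> E.
  by rewrite in_symdiff !in_edge_preim in_symdiff; case: (E \in edges e).
by rewrite in_edge_preim !inE andbF.
Qed.

Lemma card_edge_preim D : {in edge_preim D, forall E : {set V}, #|E| = 2}.
Proof. exact: (sub_in1 (subsetP (edge_preim_sub D)) (card_edges e_irr)). Qed.

Lemma edge_preimK Y : Y \subset edges e -> edge_preim (f @: Y) = Y.
Proof.
move=> /subsetP Ye; apply/setP=> E; rewrite in_edge_preim.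
apply/andP/idP=> [[Ee /imsetP [F YF /f_inj eqEF]] | YE]; last by rewrite Ye ?imset_f.
by rewrite (eqEF Ee (Ye F YF)).
Qed.

Lemma imset_edge_preim D : f @: edge_preim D = D.
Proof.
apply/setP=> x; apply/imsetP/idP=> [[E] | xD].
  by rewrite in_edge_preim => /andP [_ ?] ->.
have /imsetP [E Ee eq_x] : x \in f @: edges e by rewrite f_onto inE.
by exists E; rewrite // in_edge_preim Ee -eq_x.
Qed.

Lemma set0_notin_circuits s : is_cycle e s -> set0 \notin C.
Proof.
move=> cs; apply/negP=> C0; have := C_clutter C0 (f_cycle cs) (sub0set _).
by move/esym/eqP; rewrite imset_eq0 cycle_edges_eq0; case: s cs.
Qed.

Hypothesis C_neq0 : set0 \notin C.

Lemma even_edge_preim_cycle D : D \in C -> odd_vertices (edge_preim D) = set0 ->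
  exists2 s, is_cycle e s & D = f @: cycle_edges s.
Proof.
move=> CD even_X; have Xe := edge_preim_sub D.
have X_neq0 : edge_preim D != set0.
  by apply: contraNneq C_neq0 => X0; rewrite -(imset0 f) -X0 imset_edge_preim.
have [s cs] := even_edges_cycle (@card_edge_preim D) X_neq0 even_X.
have cs_e : is_cycle e s by rewrite -is_cycle_edges // (is_cycle_adjS Xe cs).
exists s => //; symmetry; apply: C_clutter (f_cycle cs_e) CD _.
rewrite -(imset_edge_preim D); apply: imsetS.
by case/andP: cs => /andP [cs _] _; apply: cycle_edges_adj_sub.
Qed.

Lemma edge_preim_big_circuits D J : D \in C -> J \subset edges e ->
  odd_vertices J = odd_vertices (edge_preim D) ->
  exists2 l, {subset l <= C} & J = edge_preim (\big[@symdiff S/set0]_(A <- l) A).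
Proof.
move=> CD Je eqJ; set Z := symdiff (edge_preim D) J.
have Ze : Z \subset edges e.
  by apply: subset_trans (symdiff_subU _ _) _; rewrite subUset edge_preim_sub Je.
have even_Z : odd_vertices Z = set0 by rewrite odd_vertices_symdiff eqJ symdiffv.
have card2 := sub_in1 (subsetP Ze) (card_edges e_irr).
have [ss cycle_ss defZ] := even_edges_big_symdiff_cycles card2 even_Z.
have cycle_ss_e s : s \in ss -> is_cycle e s.
  by move/cycle_ss/(is_cycle_adjS Ze); rewrite is_cycle_edges.
exists (D :: [seq f @: cycle_edges s | s <- ss]).
  move=> A; rewrite inE => /predU1P [-> // | /mapP [s /cycle_ss_e cs ->]].
  exact: f_cycle.
have preim_ss : {in ss, forall s, edge_preim (f @: cycle_edges s) = cycle_edges s}.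
  by move=> s /cycle_ss_e cs; apply/edge_preimK/cycle_edges_sub_edges.
by rewrite edge_preim_big_symdiff big_cons big_map (eq_big_seq _ preim_ss) -defZ symdiffK.
Qed.

Lemma preim_circuits_sub_cycle_edges s J (l : seq {set S}) : is_cycle e s ->
  J \subset cycle_edges s -> {subset l <= C} ->
  J = edge_preim (\big[@symdiff S/set0]_(A <- l) A) -> J = set0 \/ J = cycle_edges s.
Proof.
move=> cs Js lC defJ; have [-> | J_neq0] := eqVneq J set0; [by left | right].
have se := cycle_edges_sub_edges e_sym cs.
have fJ : f @: J = \big[@symdiff S/set0]_(A <- l) A by rewrite defJ imset_edge_preim.
have [|D CD D_sub] := circuit_sub_big_symdiff C_binary C_neq0 lC.
  by rewrite -fJ imset_eq0.
have defD : D = f @: cycle_edges s.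
  by apply: C_clutter CD (f_cycle cs) _; rewrite (subset_trans D_sub) // -fJ imsetS.
apply/eqP; rewrite eqEsubset Js /= -(edge_preimK se) -(edge_preimK (subset_trans Js se)).
by apply: edge_preimS; rewrite -defD fJ.
Qed.

Lemma odd_vertices_edge_preim_eq0 s D : D \in C -> is_cycle e s ->
  odd_vertices (edge_preim D) \subset cycle_vertices s -> odd_vertices (edge_preim D) = set0.
Proof.
move=> CD cs sub_s; have /andP [/andP [_ us] s_gt2] := cs.
have even_T := odd_card_odd_vertices (@card_edge_preim D).
have [J Js defJ] := cycle_edges_T_join us sub_s even_T.
have Je := subset_trans Js (cycle_edges_sub_edges e_sym cs).
have [l lC eqJ] := edge_preim_big_circuits CD Je defJ.
have [J0 | Jc] := preim_circuits_sub_cycle_edges cs Js lC eqJ.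
  by rewrite -defJ J0 odd_vertices0.
by rewrite -defJ Jc odd_vertices_cycle_edges.
Qed.

Lemma circuit_image_of_cycle D : even_sets_on_cycles e -> D \in C ->
  exists2 s, is_cycle e s & D = f @: cycle_edges s.
Proof.
move=> cover CD.
have [s [cs sub_s]] := cover _ (odd_card_odd_vertices (@card_edge_preim D)).
exact/(even_edge_preim_cycle CD)/(odd_vertices_edge_preim_eq0 CD cs sub_s).
Qed.

End CircuitInjection.

Lemma even_sets_on_cycles_trivial_ci (V : finType) (e : rel V) (S : finType)
    (C : {set {set S}}) (f : {set V} -> S) :
  symmetric e -> irreflexive e -> even_sets_on_cycles e ->
  is_matroid C -> is_binary C -> circuit_injection e C f -> ~ nontrivial_ci e C f.
Proof.
move=> e_sym e_irr cover [_ [C_clutter _]] C_binary [f_inj [f_onto f_cycle]] [D CD D_new].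
have even0 : ~~ odd #|@set0 V| by rewrite cards0.
have [s0 [cs0 _]] := cover set0 even0.
have C_neq0 := set0_notin_circuits f_cycle C_clutter cs0.
have [s cs defD] := circuit_image_of_cycle e_sym e_irr f_inj f_onto f_cycle
                      C_clutter C_binary C_neq0 cover CD.
exact: D_new s cs defD.
Qed.

Theorem lemma2p3 (V : finType) (e : rel V) :
  symmetric e -> irreflexive e -> no_isolated_vertices e ->
  ((exists N, #|V| = N.*2.+1) -> almost_hamiltonian e ->
    forall (S : finType) (C : {set {set S}}) (f : {set V} -> S),
      is_matroid C -> is_binary C -> circuit_injection e C f ->
      ~ nontrivial_ci e C f) /\
  ((exists N, #|V| = N.*2) -> hamiltonian e ->
    forall (S : finType) (C : {set {set S}}) (f : {set V} -> S),
      is_matroid C -> is_binary C -> circuit_injection e C f ->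
      ~ nontrivial_ci e C f).
Proof.
(* The argument never needs the absence of isolated vertices. *)
move=> e_sym e_irr _; split=> [[N card_V] ham | _ ham] S C f.
  apply: even_sets_on_cycles_trivial_ci => //.
  by apply: almost_hamiltonian_even_sets; rewrite // card_V /= odd_double.
by apply: even_sets_on_cycles_trivial_ci => //; apply: hamiltonian_even_sets.
Qed.
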